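(* Let $M$ be a categorical monoid, $\mathcal F$ a family of finite subgroups of $\mathrm{Ob}(M)$, and $G$ a discrete group. Let $f\colon C\to D$ be a $\mathcal G_{\mathcal F,G}$-equivalence in $(M\times G)\text{-}\mathbf{Cat}$ such that $G$ acts freely on both $C$ and $D$. Then the induced functor of orbit categories $f/G\colon C/G\to D/G$ is an $\mathcal F$-equivalence in $M\text{-}\mathbf{Cat}$.
   Context: A categorical monoid is a strict monoidal category; $M\text{-}\mathbf{Cat}$ denotes small categories with strict $M$-action. A family of finite subgroups is a collection closed under subgroups and conjugation. For a subgroup $H$ and an $M$-category $C$, $C^H$ is the subcategory of $H$-fixed objects and morphisms; a map $f$ is an $\mathcal F$-equivalence if $f^H$ is an equivalence of categories for all $H\in\mathcal F$. $\mathcal G_{\mathcal F,G}$ is the collection of graph subgroups $\Gamma_{H,\phi}=\{(h,\phi(h)):h\in H\}\subset \mathrm{Ob}(M)\times G$ with $H\in\mathcal F$ and $\phi\colon H\to G$ a homomorphism. $G$ acts freely on a category if it acts freely on its set of objects (hence on morphisms). $C/G$ denotes the quotient (colimit) in $\mathbf{Cat}$ with the induced $M$-action. *)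

(* Categories are small, presented by a type of
   objects, a type of morphisms, source/target/identity and a total composition
   function whose laws are required only on composable pairs. *)
From Stdlib Require Import List ClassicalEpsilon ProofIrrelevance.

Set Implicit Arguments.

(* comp g f  is  g o f, meaningful when tgt f = src g *)
Record Category : Type := {
  Ob : Type;
  Mor : Type;
  src : Mor -> Ob;
  tgt : Mor -> Ob;
  idm : Ob -> Mor;
  comp : Mor -> Mor -> Mor;
  src_idm : forall x, src (idm x) = x;
  tgt_idm : forall x, tgt (idm x) = x;
  src_comp : forall f g, tgt f = src g -> src (comp g f) = src f;
  tgt_comp : forall f g, tgt f = src g -> tgt (comp g f) = tgt g;
  comp_idl : forall f, comp (idm (tgt f)) f = f;
  comp_idr : forall f, comp f (idm (src f)) = f;
  comp_assoc : forall f g h, tgt f = src g -> tgt g = src h ->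
      comp h (comp g f) = comp (comp h g) f }.
Arguments src {c} _. Arguments tgt {c} _. Arguments idm {c} _. Arguments comp {c} _ _.

Record Functor (C D : Category) : Type := {
  fob : Ob C -> Ob D;
  fmor : Mor C -> Mor D;
  f_src : forall u, src (fmor u) = fob (src u);
  f_tgt : forall u, tgt (fmor u) = fob (tgt u);
  f_idm : forall x, fmor (idm x) = idm (fob x);
  f_comp : forall u v, tgt u = src v -> fmor (comp v u) = comp (fmor v) (fmor u) }.
Arguments fob {C D} _ _. Arguments fmor {C D} _ _.

Definition nat_iso {C D : Category} (Fo Go : Ob C -> Ob D) (Fm Gm : Mor C -> Mor D) : Prop :=
  exists (al be : Ob C -> Mor D),
    (forall x, src (al x) = Fo x /\ tgt (al x) = Go x /\
               src (be x) = Go x /\ tgt (be x) = Fo x /\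
               comp (be x) (al x) = idm (Fo x) /\ comp (al x) (be x) = idm (Go x)) /\
    (forall u, comp (al (tgt u)) (Fm u) = comp (Gm u) (al (src u))).

Definition is_equivalence {C D : Category} (F : Functor C D) : Prop :=
  exists K : Functor D C,
    nat_iso (fun x => x) (fun x => fob K (fob F x))
            (fun u => u) (fun u => fmor K (fmor F u)) /\
    nat_iso (fun y => fob F (fob K y)) (fun y => y)
            (fun v => fmor F (fmor K v)) (fun v => v).

Record CatMonoid : Type := {
  mcat : Category;
  tens : Ob mcat -> Ob mcat -> Ob mcat;
  tensm : Mor mcat -> Mor mcat -> Mor mcat;
  munit : Ob mcat;
  src_tensm : forall a b, src (tensm a b) = tens (src a) (src b);
  tgt_tensm : forall a b, tgt (tensm a b) = tens (tgt a) (tgt b);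
  tensm_idm : forall x y, tensm (idm x) (idm y) = idm (tens x y);
  tensm_comp : forall a a' b b', tgt a = src a' -> tgt b = src b' ->
      tensm (comp a' a) (comp b' b) = comp (tensm a' b') (tensm a b);
  tens_assoc : forall x y z, tens (tens x y) z = tens x (tens y z);
  tensm_assoc : forall a b c, tensm (tensm a b) c = tensm a (tensm b c);
  tens_unitl : forall x, tens munit x = x;
  tens_unitr : forall x, tens x munit = x;
  tensm_unitl : forall a, tensm (idm munit) a = a;
  tensm_unitr : forall a, tensm a (idm munit) = a }.
Arguments tens {_} _ _. Arguments tensm {_} _ _.

Record MAction (M : CatMonoid) (C : Category) : Type := {
  aob : Ob (mcat M) -> Ob C -> Ob C;
  amor : Mor (mcat M) -> Mor C -> Mor C;
  src_amor : forall a u, src (amor a u) = aob (src a) (src u);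
  tgt_amor : forall a u, tgt (amor a u) = aob (tgt a) (tgt u);
  amor_idm : forall m x, amor (idm m) (idm x) = idm (aob m x);
  amor_comp : forall a a' u u', tgt a = src a' -> tgt u = src u' ->
      amor (comp a' a) (comp u' u) = comp (amor a' u') (amor a u);
  aob_tens : forall m n x, aob (tens m n) x = aob m (aob n x);
  amor_tens : forall a b u, amor (tensm a b) u = amor a (amor b u);
  aob_unit : forall x, aob (munit M) x = x;
  amor_unit : forall u, amor (idm (munit M)) u = u }.
Arguments aob {M C} _ _ _. Arguments amor {M C} _ _ _.

Definition Equivariant {M : CatMonoid} {C D : Category}
  (A : MAction M C) (B : MAction M D) (f : Functor C D) : Prop :=
  (forall m x, fob f (aob A m x) = aob B m (fob f x)) /\
  (forall a u, fmor f (amor A a u) = amor B a (fmor f u)).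

Lemma sig_eq {T : Type} (P : T -> Prop) (a b : {x | P x}) :
  proj1_sig a = proj1_sig b -> a = b.
Proof.
  destruct a as [a pa], b as [b pb]; simpl; intros ->.
  f_equal; apply proof_irrelevance.
Qed.

Section Fix.
Variables (M : CatMonoid) (C : Category) (A : MAction M C) (K : Ob (mcat M) -> Prop).

Definition fixob (x : Ob C) := forall k, K k -> aob A k x = x.
Definition fixmor (u : Mor C) := forall k, K k -> amor A (idm k) u = u.

Lemma fix_src u : fixmor u -> fixob (src u).
Proof.
  intros H k Hk. rewrite <- (src_idm _ k) at 1. rewrite <- src_amor. now rewrite H.
Qed.
Lemma fix_tgt u : fixmor u -> fixob (tgt u).
Proof.
  intros H k Hk. rewrite <- (tgt_idm _ k) at 1. rewrite <- tgt_amor. now rewrite H.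
Qed.
Lemma fix_idm x : fixob x -> fixmor (idm x).
Proof. intros H k Hk. now rewrite amor_idm, H. Qed.
Lemma fix_comp u v : tgt u = src v -> fixmor u -> fixmor v -> fixmor (comp v u).
Proof.
  intros e Hu Hv k Hk.
  rewrite <- (comp_idl _ (idm k)), tgt_idm.
  rewrite amor_comp by (rewrite ?tgt_idm, ?src_idm; auto).
  now rewrite Hu, Hv.
Qed.

Definition FOb := {x | fixob x}.
Definition FMor := {u | fixmor u}.
Definition fsrc (u : FMor) : FOb := exist _ _ (fix_src (proj2_sig u)).
Definition ftgt (u : FMor) : FOb := exist _ _ (fix_tgt (proj2_sig u)).
Definition fidm (x : FOb) : FMor := exist _ _ (fix_idm (proj2_sig x)).
Definition fcomp (v u : FMor) : FMor :=
  match excluded_middle_informative (fixmor (comp (proj1_sig v) (proj1_sig u))) with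
  | left p => exist _ _ p
  | right _ => v
  end.

Lemma fcomp_val (u v : FMor) : ftgt u = fsrc v ->
  proj1_sig (fcomp v u) = comp (proj1_sig v) (proj1_sig u).
Proof.
  intros e. assert (e' : tgt (proj1_sig u) = src (proj1_sig v))
    by exact (f_equal (@proj1_sig _ _) e).
  unfold fcomp. destruct excluded_middle_informative as [p|n]; auto.
  exfalso; apply n, fix_comp; auto; apply proj2_sig.
Qed.

Definition FixCat : Category.
Proof.
  refine {| Ob := FOb; Mor := FMor; src := fsrc; tgt := ftgt; idm := fidm; comp := fcomp |}.
  - intros x; apply sig_eq; simpl; apply src_idm.
  - intros x; apply sig_eq; simpl; apply tgt_idm.
  - intros f g e; apply sig_eq; simpl; rewrite fcomp_val by auto;
      apply src_comp; exact (f_equal (@proj1_sig _ _) e).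
  - intros f g e; apply sig_eq; simpl; rewrite fcomp_val by auto;
      apply tgt_comp; exact (f_equal (@proj1_sig _ _) e).
  - intros f; apply sig_eq; rewrite fcomp_val by (apply sig_eq; simpl; now rewrite src_idm);
      simpl; apply comp_idl.
  - intros f; apply sig_eq; rewrite fcomp_val by (apply sig_eq; simpl; now rewrite tgt_idm);
      simpl; apply comp_idr.
  - intros f g h e1 e2. apply sig_eq.
    assert (e1' := f_equal (@proj1_sig _ _) e1). assert (e2' := f_equal (@proj1_sig _ _) e2).
    simpl in e1', e2'.
    assert (c1 : ftgt (fcomp g f) = fsrc h).
    { apply sig_eq; simpl. rewrite fcomp_val by auto. now rewrite tgt_comp. }
    assert (c2 : ftgt f = fsrc (fcomp h g)).
    { apply sig_eq; simpl. rewrite fcomp_val by auto. now rewrite src_comp. }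
    rewrite (fcomp_val c1), (fcomp_val c2), (fcomp_val e1), (fcomp_val e2).
    apply comp_assoc; auto.
Defined.
End Fix.

Definition fix_functor {M : CatMonoid} {C D : Category}
  {A : MAction M C} {B : MAction M D} {f : Functor C D}
  (e : Equivariant A B f) (K : Ob (mcat M) -> Prop) :
  Functor (FixCat A K) (FixCat B K).
Proof.
  pose proof (proj1 e) as eo. pose proof (proj2 e) as em.
  unshelve refine (Build_Functor (FixCat A K) (FixCat B K)
     (fun x : FOb A K => exist _ (fob f (proj1_sig x)) _ : FOb B K)
     (fun u : FMor A K => exist _ (fmor f (proj1_sig u)) _ : FMor B K) _ _ _ _).
  - intros k Hk. rewrite <- eo. now rewrite (proj2_sig x k Hk).
  - intros k Hk. rewrite <- em. now rewrite (proj2_sig u k Hk).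
  - intros u; apply sig_eq; simpl; apply f_src.
  - intros u; apply sig_eq; simpl; apply f_tgt.
  - intros x; apply sig_eq; simpl; apply f_idm.
  - intros u v h. assert (h' := f_equal (@proj1_sig _ _) h). simpl in h'.
    apply sig_eq. simpl. rewrite !fcomp_val; simpl; auto.
    + now apply f_comp.
    + apply sig_eq; simpl. now rewrite f_tgt, f_src, h'.
Defined.

Definition K_equivalence {M : CatMonoid} {C D : Category}
  (A : MAction M C) (B : MAction M D) (f : Functor C D) (K : Ob (mcat M) -> Prop) : Prop :=
  exists e : Equivariant A B f, is_equivalence (fix_functor e K).

Record Group : Type := {
  gcar : Type;
  gmul : gcar -> gcar -> gcar;
  gone : gcar;
  ginv : gcar -> gcar;
  gmulA : forall x y z, gmul x (gmul y z) = gmul (gmul x y) z;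
  gmul1l : forall x, gmul gone x = x;
  gmul1r : forall x, gmul x gone = x;
  gmulVl : forall x, gmul (ginv x) x = gone;
  gmulVr : forall x, gmul x (ginv x) = gone }.
Arguments gmul {_} _ _. Arguments gone {_}. Arguments ginv {_} _.

Section Prod.
Variables (M : CatMonoid) (G : Group).
Let MC := mcat M.

Definition ProdCat : Category.
Proof.
  refine {| Ob := Ob MC * gcar G; Mor := Mor MC * gcar G;
            src := fun p => (src (fst p), snd p); tgt := fun p => (tgt (fst p), snd p);
            idm := fun o => (idm (fst o), snd o);
            comp := fun q p => (comp (fst q) (fst p), snd p) |};
  intros; repeat match goal with p : _ * _ |- _ => destruct p end; simpl in *;
  repeat match goal with H : (_, _) = (_, _) |- _ => injection H; clear H; intros end;
  subst; f_equal; auto using src_idm, tgt_idm, src_comp, tgt_comp, comp_idl, comp_idr, comp_assoc.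
Defined.

(* the categorical monoid M x G, with G viewed as a discrete categorical monoid *)
Definition ProdMG : CatMonoid.
Proof.
  refine {| mcat := ProdCat;
            tens := fun (o o' : Ob MC * gcar G) => (tens (fst o) (fst o'), gmul (snd o) (snd o'));
            tensm := fun (a b : Mor MC * gcar G) => (tensm (fst a) (fst b), gmul (snd a) (snd b));
            munit := (munit M, gone) |};
  intros; repeat match goal with p : _ * _ |- _ => destruct p end; simpl in *;
  repeat match goal with H : (_, _) = (_, _) |- _ => injection H; clear H; intros end;
  subst; f_equal;
  first [ solve [auto using src_tensm, tgt_tensm, tensm_idm, tensm_comp, tens_assoc,
    tensm_assoc, tens_unitl, tens_unitr, tensm_unitl, tensm_unitr, gmul1l, gmul1r]
        | solve [symmetry; auto using src_tensm, tgt_tensm, tensm_idm, tensm_comp, tens_assoc,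
    tensm_assoc, tens_unitl, tens_unitr, tensm_unitl, tensm_unitr, gmul1l, gmul1r, gmulA]
        | idtac ].
  all: try apply src_tensm; try apply tgt_tensm.
  all: match goal with |- (_, _) = ?p => destruct p; simpl; f_equal;
         auto using tens_unitl, tens_unitr, tensm_unitl, tensm_unitr, gmul1l, gmul1r end.
Defined.
End Prod.

Section MG.
Variables (M : CatMonoid) (G : Group) (C : Category) (A : MAction (ProdMG M G) C).

Definition g_ob (g : gcar G) (x : Ob C) : Ob C := aob A ((munit M, g) : Ob (mcat (ProdMG M G))) x.
Definition g_mor (g : gcar G) (u : Mor C) : Mor C :=
  amor A ((idm (munit M), g) : Mor (mcat (ProdMG M G))) u.
Definition m_ob (m : Ob (mcat M)) (x : Ob C) : Ob C := aob A ((m, gone) : Ob (mcat (ProdMG M G))) x.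
Definition m_mor (a : Mor (mcat M)) (u : Mor C) : Mor C :=
  amor A ((a, gone) : Mor (mcat (ProdMG M G))) u.

Definition free_action : Prop := forall g x, g_ob g x = x -> g = gone.

(* q : C -> Q exhibits Q as the quotient (colimit in Cat) C/G *)
Definition is_orbit_quotient (Q : Category) (q : Functor C Q) : Prop :=
  (forall g x, fob q (g_ob g x) = fob q x) /\
  (forall g u, fmor q (g_mor g u) = fmor q u) /\
  forall (E : Category) (h : Functor C E),
    (forall g x, fob h (g_ob g x) = fob h x) ->
    (forall g u, fmor h (g_mor g u) = fmor h u) ->
    exists k : Functor Q E,
      (forall x, fob k (fob q x) = fob h x) /\ (forall u, fmor k (fmor q u) = fmor h u) /\
      forall k' : Functor Q E,
        (forall x, fob k' (fob q x) = fob h x) -> (forall u, fmor k' (fmor q u) = fmor h u) ->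
        (forall y, fob k' y = fob k y) /\ (forall v, fmor k' v = fmor k v).

Definition induced_action (Q : Category) (q : Functor C Q) (AQ : MAction M Q) : Prop :=
  (forall m x, fob q (m_ob m x) = aob AQ m (fob q x)) /\
  (forall a u, fmor q (m_mor a u) = amor AQ a (fmor q u)).
End MG.

Definition is_subgroup (M : CatMonoid) (H : Ob (mcat M) -> Prop) : Prop :=
  H (munit M) /\ (forall h h', H h -> H h' -> H (tens h h')) /\
  (forall h, H h -> exists h', H h' /\ tens h h' = munit M /\ tens h' h = munit M).

Arguments is_subgroup {M} H.

Definition is_finite_set {T : Type} (H : T -> Prop) : Prop :=
  exists l : list T, forall x, H x -> In x l.

Definition is_family (M : CatMonoid) (F : (Ob (mcat M) -> Prop) -> Prop) : Prop :=
  (forall H, F H -> is_subgroup H /\ is_finite_set H) /\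
  (forall H K, F H -> is_subgroup K -> (forall x, K x -> H x) -> F K) /\
  (forall H u u', F H -> tens u u' = munit M -> tens u' u = munit M ->
     F (fun x => exists h, H h /\ x = tens (tens u h) u')).

Definition group_hom_on (M : CatMonoid) (G : Group) (H : Ob (mcat M) -> Prop)
  (phi : Ob (mcat M) -> gcar G) : Prop :=
  forall h h', H h -> H h' -> phi (tens h h') = gmul (phi h) (phi h').

Definition graph_subgroup (M : CatMonoid) (G : Group) (H : Ob (mcat M) -> Prop)
  (phi : Ob (mcat M) -> gcar G) : Ob (mcat (ProdMG M G)) -> Prop :=
  fun p => H (fst p) /\ snd p = phi (fst p).

Arguments is_family {M} F.
Arguments group_hom_on {M G} H phi.
Arguments graph_subgroup {M G} H phi _.
Arguments free_action {M G C} A.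
Arguments is_orbit_quotient {M G C} A {Q} q.
Arguments induced_action {M G C} A {Q} q AQ.

From Stdlib Require Import Classical ClassicalEpsilon FunctionalExtensionality PropExtensionality.

(* Since G acts freely, the quotient functor q : C -> C/G is surjective on objects and
   morphisms, identifies two objects (or morphisms) only when they lie in one G-orbit,
   and identifies two morphisms with a common source only when they are equal.  If q c
   is fixed by H, then each h c lies in the orbit of c, so h c = phi(h)^-1 c for a
   unique phi(h) in G; uniqueness makes phi a homomorphism, i.e. c is fixed by the graph
   subgroup Gamma_{H,phi}, and so is every morphism out of c with H-fixed image.  Hence
   every object and morphism of (C/G)^H comes from some C^Gamma_{H,phi}, and essential
   surjectivity and full faithfulness of (f/G)^H descend from those of f^Gamma_{H,phi}. *)

Definition inverse_pair {E : Category} (a b : Mor E) (x y : Ob E) : Prop :=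
  src a = x /\ tgt a = y /\ src b = y /\ tgt b = x /\ comp b a = idm x /\ comp a b = idm y.

Ltac endpoints_using t :=
  repeat first [ rewrite src_comp by endpoints_using t | rewrite tgt_comp by endpoints_using t
               | rewrite src_idm | rewrite tgt_idm | rewrite f_src | rewrite f_tgt | t ];
  congruence.

Ltac endpoints := endpoints_using fail.

Section Isomorphisms.
Context {E : Category} {a b : Mor E} {x y : Ob E}.
Hypothesis ab : inverse_pair a b x y.

Lemma inverse_pair_sym : inverse_pair b a y x.
Proof. destruct ab as (? & ? & ? & ? & ? & ?); repeat split; assumption. Qed.

Lemma comp_inverse_pair_l {p : Mor E} : tgt p = x -> comp b (comp a p) = p.
Proof.
  destruct ab as (sa & ta & sb & tb & ba & _); intros tp.
  rewrite comp_assoc by congruence. rewrite ba, <- tp. apply comp_idl.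
Qed.

Lemma comp_inverse_pair_r {p : Mor E} : src p = y -> comp (comp p a) b = p.
Proof.
  destruct ab as (sa & ta & sb & tb & _ & ab'); intros sp.
  rewrite <- comp_assoc by congruence. rewrite ab', <- sp. apply comp_idr.
Qed.

Lemma inverse_pair_cancel_r (p p' : Mor E) :
  src p = y -> src p' = y -> comp p a = comp p' a -> p = p'.
Proof.
  intros sp sp' e. rewrite <- (comp_inverse_pair_r sp), <- (comp_inverse_pair_r sp').
  now rewrite e.
Qed.
End Isomorphisms.

Section FunctorProperties.
Context {C D : Category} (F : Functor C D).

Definition ess_surj : Prop := forall y, exists x a b, inverse_pair a b (fob F x) y.

Definition faithful : Prop := forall u u',
  src u = src u' -> tgt u = tgt u' -> fmor F u = fmor F u' -> u = u'.

Definition full : Prop := forall x x' v, src v = fob F x -> tgt v = fob F x' ->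
  exists u, src u = x /\ tgt u = x' /\ fmor F u = v.

Lemma is_equivalence_ess_surj : is_equivalence F -> ess_surj.
Proof. intros (K & _ & al & be & Hiso & _) y. exists (fob K y), (al y), (be y). apply Hiso. Qed.

Lemma is_equivalence_faithful : is_equivalence F -> faithful.
Proof.
  intros (K & (al & be & Hiso & Hnat) & _).
  assert (conj_unit : forall u,
    u = comp (be (tgt u)) (comp (fmor K (fmor F u)) (al (src u)))).
  { intro u. rewrite <- Hnat. symmetry. apply (comp_inverse_pair_l (Hiso (tgt u))); auto. }
  intros u u' su tu e. rewrite (conj_unit u), (conj_unit u'). congruence.
Qed.

Lemma is_equivalence_full : is_equivalence F -> full.
Proof.
  intros (K & (al & be & Hiso & Hnat) & (al' & be' & Hiso' & Hnat')) x x' v sv tv.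
  assert (K_faithful : forall v1 v2, src v1 = src v2 -> tgt v1 = tgt v2 ->
                         fmor K v1 = fmor K v2 -> v1 = v2).
  { assert (conj_counit : forall v,
      v = comp (comp (al' (tgt v)) (fmor F (fmor K v))) (be' (src v))).
    { intro w. rewrite Hnat'. symmetry.
      apply (comp_inverse_pair_r (Hiso' (src w))); auto. }
    intros v1 v2 s12 t12 e. rewrite (conj_counit v1), (conj_counit v2). congruence. }
  destruct (Hiso x) as (sa & ta & sb & tb & _ & _).
  destruct (Hiso x') as (sa' & ta' & sb' & tb' & _ & _).
  set (u := comp (be x') (comp (fmor K v) (al x))).
  assert (su : src u = x) by (unfold u; endpoints).
  assert (tu : tgt u = x') by (unfold u; endpoints).
  exists u. repeat split; auto.
  apply K_faithful; [endpoints | endpoints |].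
  apply (inverse_pair_cancel_r (Hiso x)); [endpoints | endpoints |].
  transitivity (comp (al (tgt u)) u); [now rewrite Hnat, su |].
  rewrite tu. apply (comp_inverse_pair_l (inverse_pair_sym (Hiso x'))). endpoints.
Qed.
End FunctorProperties.

Section QuasiInverse.
Context {C D : Category} (F : Functor C D).
Hypothesis F_faithful : faithful F.
Variables (Ko : Ob D -> Ob C) (al be : Ob D -> Mor D).
Hypothesis al_be : forall y, inverse_pair (al y) (be y) (fob F (Ko y)) y.
Variable lift : Ob C -> Ob C -> Mor D -> Mor C.
Hypothesis lift_spec : forall x x' v, src v = fob F x -> tgt v = fob F x' ->
  src (lift x x' v) = x /\ tgt (lift x x' v) = x' /\ fmor F (lift x x' v) = v.

Let src_al y : src (al y) = fob F (Ko y). Proof. apply al_be. Qed.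
Let tgt_al y : tgt (al y) = y. Proof. apply al_be. Qed.
Let src_be y : src (be y) = y. Proof. apply al_be. Qed.
Let tgt_be y : tgt (be y) = fob F (Ko y). Proof. apply al_be. Qed.

Ltac ends :=
  endpoints_using ltac:(first [rewrite src_al | rewrite tgt_al | rewrite src_be | rewrite tgt_be]).

Definition transport (v : Mor D) : Mor D := comp (be (tgt v)) (comp v (al (src v))).

Lemma transport_idm y : transport (idm y) = idm (fob F (Ko y)).
Proof.
  unfold transport. rewrite src_idm, tgt_idm.
  pose proof (comp_idl _ (al y)) as e. rewrite tgt_al in e. rewrite e. apply al_be.
Qed.

Lemma transport_comp u v : tgt u = src v ->
  transport (comp v u) = comp (transport v) (transport u).
Proof.
  intros e. unfold transport. rewrite src_comp, tgt_comp by exact e.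
  repeat rewrite <- comp_assoc by ends.
  rewrite e, (comp_inverse_pair_l (inverse_pair_sym (al_be (src v)))); [reflexivity | ends].
Qed.

Definition quasi_inverse_mor (v : Mor D) : Mor C := lift (Ko (src v)) (Ko (tgt v)) (transport v).

Lemma quasi_inverse_mor_spec v : src (quasi_inverse_mor v) = Ko (src v) /\ tgt (quasi_inverse_mor v) = Ko (tgt v) /\
                  fmor F (quasi_inverse_mor v) = transport v.
Proof. apply lift_spec; unfold transport; ends. Qed.

Definition quasi_inverse : Functor D C.
Proof.
  refine (Build_Functor D C Ko quasi_inverse_mor (fun v => proj1 (quasi_inverse_mor_spec v))
            (fun v => proj1 (proj2 (quasi_inverse_mor_spec v))) _ _).
  - intro y. destruct (quasi_inverse_mor_spec (idm y)) as (s & t & e). apply F_faithful.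
    + rewrite s, src_idm, src_idm. reflexivity.
    + rewrite t, tgt_idm, tgt_idm. reflexivity.
    + rewrite e, f_idm. apply transport_idm.
  - intros u v uv. destruct (quasi_inverse_mor_spec u) as (su & tu & eu).
    destruct (quasi_inverse_mor_spec v) as (sv & tv & ev). destruct (quasi_inverse_mor_spec (comp v u)) as (s & t & e).
    rewrite src_comp in s by exact uv. rewrite tgt_comp in t by exact uv.
    apply F_faithful; [ends | ends |].
    rewrite e, f_comp by ends. rewrite eu, ev. now apply transport_comp.
Defined.

Lemma quasi_inverse_counit :
  nat_iso (fun y => fob F (fob quasi_inverse y)) (fun y => y)
          (fun v => fmor F (fmor quasi_inverse v)) (fun v => v).
Proof.
  exists al, be. split; [exact al_be |]. intro v. simpl.
  rewrite (proj2 (proj2 (quasi_inverse_mor_spec v))). unfold transport.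
  apply (comp_inverse_pair_l (inverse_pair_sym (al_be (tgt v)))). ends.
Qed.

Definition unit_mor (x : Ob C) : Mor C := lift x (Ko (fob F x)) (be (fob F x)).
Definition unit_inv (x : Ob C) : Mor C := lift (Ko (fob F x)) x (al (fob F x)).

Lemma unit_mor_spec x : src (unit_mor x) = x /\ tgt (unit_mor x) = Ko (fob F x) /\
                        fmor F (unit_mor x) = be (fob F x).
Proof. apply lift_spec; ends. Qed.

Lemma unit_inv_spec x : src (unit_inv x) = Ko (fob F x) /\ tgt (unit_inv x) = x /\
                        fmor F (unit_inv x) = al (fob F x).
Proof. apply lift_spec; ends. Qed.

Lemma quasi_inverse_unit :
  nat_iso (fun x => x) (fun x => fob quasi_inverse (fob F x))
          (fun u => u) (fun u => fmor quasi_inverse (fmor F u)).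
Proof.
  exists unit_mor, unit_inv. split.
  - intro x. destruct (unit_mor_spec x) as (s & t & e).
    destruct (unit_inv_spec x) as (s' & t' & e'). simpl.
    do 4 (split; [assumption |]). split; apply F_faithful; try ends.
    + rewrite f_comp, f_idm, e, e' by congruence. apply al_be.
    + rewrite f_comp, f_idm, e, e' by congruence. apply al_be.
  - intro u. simpl. destruct (unit_mor_spec (tgt u)) as (s & t & e).
    destruct (unit_mor_spec (src u)) as (s' & t' & e').
    destruct (quasi_inverse_mor_spec (fmor F u)) as (sk & tk & ek). rewrite f_src in sk. rewrite f_tgt in tk.
    apply F_faithful; [ends | ends |].
    rewrite !f_comp by ends. rewrite e, e', ek. unfold transport.
    repeat rewrite comp_assoc by ends.
    rewrite f_src, f_tgt, (comp_inverse_pair_r (al_be (fob F (src u)))); [reflexivity | ends].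
Qed.
End QuasiInverse.

Lemma full_faithful_ess_surj_is_equivalence {C D : Category} (F : Functor C D) :
  ess_surj F -> full F -> faithful F -> is_equivalence F.
Proof.
  intros F_es F_full F_faithful.
  destruct (choice (fun y (p : Ob C * (Mor D * Mor D)) =>
              inverse_pair (fst (snd p)) (snd (snd p)) (fob F (fst p)) y))
    as [pick pick_spec].
  { intro y. destruct (F_es y) as (x & a & b & ab). now exists (x, (a, b)). }
  set (lift x x' v := epsilon (inhabits (idm x))
                        (fun u => src u = x /\ tgt u = x' /\ fmor F u = v)).
  assert (lift_spec : forall x x' v, src v = fob F x -> tgt v = fob F x' ->
    src (lift x x' v) = x /\ tgt (lift x x' v) = x' /\ fmor F (lift x x' v) = v).
  { intros x x' v sv tv. apply epsilon_spec, F_full; assumption. }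
  exists (quasi_inverse F F_faithful _ _ _ pick_spec lift lift_spec). split.
  - apply quasi_inverse_unit.
  - apply quasi_inverse_counit.
Qed.

Lemma functor_inverse_pair {C D : Category} (F : Functor C D) a b x y :
  inverse_pair a b x y -> inverse_pair (fmor F a) (fmor F b) (fob F x) (fob F y).
Proof.
  intros (sa & ta & sb & tb & ba & ab).
  repeat split; rewrite ?f_src, ?f_tgt; try congruence.
  - rewrite <- f_comp, ba; [apply f_idm | congruence].
  - rewrite <- f_comp, ab; [apply f_idm | congruence].
Qed.

Section FixedSubcategory.
Context {M : CatMonoid} {C : Category} (A : MAction M C) (K : Ob (mcat M) -> Prop).

Definition fix_incl : Functor (FixCat A K) C.
Proof.
  refine (Build_Functor (FixCat A K) C (@proj1_sig _ _) (@proj1_sig _ _) _ _ _ _);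
    try reflexivity.
  intros u v e. now apply fcomp_val.
Defined.

Lemma FixCat_inverse_pair (a b : FMor A K) (x y : FOb A K) :
  inverse_pair (proj1_sig a) (proj1_sig b) (proj1_sig x) (proj1_sig y) ->
  inverse_pair (a : Mor (FixCat A K)) b x y.
Proof.
  intros (sa & ta & sb & tb & ba & ab).
  assert (ab_comp : ftgt a = fsrc b) by (apply sig_eq; simpl; congruence).
  assert (ba_comp : ftgt b = fsrc a) by (apply sig_eq; simpl; congruence).
  repeat split; apply sig_eq; simpl; rewrite ?fcomp_val; assumption.
Qed.
End FixedSubcategory.

Lemma equivariant_fixob {M : CatMonoid} {C D : Category} {A : MAction M C} {B : MAction M D}
  {f : Functor C D} (K : Ob (mcat M) -> Prop) x :
  Equivariant A B f -> fixob A K x -> fixob B K (fob f x).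
Proof. intros [ef _] Hx k Hk. now rewrite <- ef, Hx. Qed.

Lemma pred_ext {T : Type} (P Q : T -> Prop) : (forall x, P x <-> Q x) -> P = Q.
Proof.
  intros H. apply functional_extensionality; intro x; apply propositional_extensionality; auto.
Qed.

Definition id_functor (C : Category) : Functor C C.
Proof. refine (Build_Functor C C (fun x => x) (fun u => u) _ _ _ _); auto. Defined.

Definition comp_functor {C D E : Category} (g : Functor D E) (f : Functor C D) : Functor C E.
Proof.
  refine (Build_Functor C E (fun x => fob g (fob f x)) (fun u => fmor g (fmor f u)) _ _ _ _).
  - intro u; now rewrite !f_src.
  - intro u; now rewrite !f_tgt.
  - intro x; now rewrite !f_idm.
  - intros u v e. rewrite f_comp by auto. apply f_comp. now rewrite f_tgt, f_src, e.
Defined.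

Definition PowerCat (C : Category) : Category.
Proof.
  refine {| Ob := Ob C -> Prop; Mor := Mor C -> Prop;
    src := fun S x => exists u, S u /\ x = src u;
    tgt := fun S x => exists u, S u /\ x = tgt u;
    idm := fun X u => exists x, X x /\ u = idm x;
    comp := fun T S w => exists v u, T v /\ S u /\ tgt u = src v /\ w = comp v u |}.
  - intros X; apply pred_ext; intro x; split.
    + intros (u & (y & Hy & ->) & ->). now rewrite src_idm.
    + intros Hx. exists (idm x); split; [exists x; auto | now rewrite src_idm].
  - intros X; apply pred_ext; intro x; split.
    + intros (u & (y & Hy & ->) & ->). now rewrite tgt_idm.
    + intros Hx. exists (idm x); split; [exists x; auto | now rewrite tgt_idm].
  - intros S T e; apply pred_ext; intro x; split.
    + intros (w & (v & u & Hv & Hu & e' & ->) & ->). exists u; split; auto. now apply src_comp.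
    + intros (u & Hu & ->).
      assert (h : (fun x => exists u, S u /\ x = tgt u) (tgt u)) by (exists u; auto).
      rewrite e in h. destruct h as (v & Hv & ev).
      exists (comp v u); split; [exists v, u; auto | symmetry; now apply src_comp].
  - intros S T e; apply pred_ext; intro x; split.
    + intros (w & (v & u & Hv & Hu & e' & ->) & ->). exists v; split; auto. now apply tgt_comp.
    + intros (v & Hv & ->).
      assert (h : (fun x => exists v, T v /\ x = src v) (src v)) by (exists v; auto).
      rewrite <- e in h. destruct h as (u & Hu & eu).
      exists (comp v u); split; [exists v, u; auto | symmetry; now apply tgt_comp].
  - intros S; apply pred_ext; intro w; split.
    + intros (v & u & (x & (u' & Hu' & ->) & ->) & Hu & e & ->).
      rewrite src_idm in e. rewrite <- e. now rewrite comp_idl.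
    + intros Hw. exists (idm (tgt w)), w. repeat split; auto.
      * exists (tgt w); split; eauto.
      * now rewrite src_idm.
      * now rewrite comp_idl.
  - intros S; apply pred_ext; intro w; split.
    + intros (v & u & Hv & (x & (u' & Hu' & ->) & ->) & e & ->).
      rewrite tgt_idm in e. rewrite e. now rewrite comp_idr.
    + intros Hw. exists w, (idm (src w)). repeat split; auto.
      * exists (src w); split; eauto.
      * now rewrite tgt_idm.
      * now rewrite comp_idr.
  - intros S T U _ _; apply pred_ext; intro r; split.
    + intros (w & z & Hw & (v & u & Hv & Hu & e1 & ->) & e2 & ->).
      rewrite tgt_comp in e2 by auto.
      exists (comp w v), u. repeat split; auto.
      * exists w, v; auto.
      * rewrite src_comp; auto.
      * now apply comp_assoc.
    + intros (z & u & (w & v & Hw & Hv & e1 & ->) & Hu & e2 & ->).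
      rewrite src_comp in e2 by auto.
      exists w, (comp v u). repeat split; auto.
      * exists v, u; auto.
      * rewrite tgt_comp; auto.
      * symmetry; now apply comp_assoc.
Defined.

Section SubCategory.
Context {Q : Category} {Po : Ob Q -> Prop} {Pm : Mor Q -> Prop}.
Hypothesis Pm_src : forall u, Pm u -> Po (src u).
Hypothesis Pm_tgt : forall u, Pm u -> Po (tgt u).
Hypothesis Pm_idm : forall x, Po x -> Pm (idm x).
Hypothesis Pm_comp : forall u v, tgt u = src v -> Pm u -> Pm v -> Pm (comp v u).

Definition SubCat : Category.
Proof.
  refine {| Ob := {x | Po x}; Mor := {u | Pm u};
    src := fun u => exist _ (src (proj1_sig u)) (Pm_src _ (proj2_sig u));
    tgt := fun u => exist _ (tgt (proj1_sig u)) (Pm_tgt _ (proj2_sig u));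
    idm := fun x => exist _ (idm (proj1_sig x)) (Pm_idm _ (proj2_sig x));
    comp := fun v u =>
      match excluded_middle_informative (Pm (comp (proj1_sig v) (proj1_sig u))) with
      | left p => exist _ _ p | right _ => v end |}.
  all: intros; repeat match goal with p : {_ | _} |- _ => destruct p end; simpl in *.
  all: repeat match goal with h : exist _ _ _ = exist _ _ _ |- _ =>
         apply (f_equal (@proj1_sig _ _)) in h; simpl in h end.
  all: apply sig_eq; simpl.
  all: repeat (destruct excluded_middle_informative; simpl in *).
  all: try (exfalso; match goal with n : ~ _ |- _ => apply n;
            repeat (apply Pm_comp; rewrite ?tgt_idm, ?src_idm, ?src_comp, ?tgt_comp by auto);
            auto; rewrite ?tgt_idm, ?src_idm, ?src_comp, ?tgt_comp; auto; fail end).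
  all: auto using src_idm, tgt_idm, src_comp, tgt_comp, comp_idl, comp_idr, comp_assoc.
Defined.

Lemma SubCat_comp_val (u v : Mor SubCat) :
  tgt u = src v -> proj1_sig (comp v u) = comp (proj1_sig v) (proj1_sig u).
Proof.
  intros e. apply (f_equal (@proj1_sig _ _)) in e. simpl in e. simpl.
  destruct excluded_middle_informative as [p|n]; auto.
  exfalso; apply n, Pm_comp; auto; apply proj2_sig.
Qed.

Definition SubCat_incl : Functor SubCat Q.
Proof.
  refine (Build_Functor SubCat Q (@proj1_sig _ _) (@proj1_sig _ _) _ _ _ _); try reflexivity.
  apply SubCat_comp_val.
Defined.
End SubCategory.

Lemma gmul_inv_eq (G : Group) (a b : gcar G) : gmul (ginv b) a = gone -> a = b.
Proof.
  intros e. rewrite <- (gmul1l G a), <- (gmulVr G b), <- gmulA, e. apply gmul1r.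
Qed.

Section ProductAction.
Context {M : CatMonoid} {G : Group} {C : Category} (A : MAction (ProdMG M G) C).

Lemma g_ob_mul a b x : g_ob A a (g_ob A b x) = g_ob A (gmul a b) x.
Proof. unfold g_ob. rewrite <- aob_tens. simpl. now rewrite tens_unitl. Qed.

Lemma g_ob_one x : g_ob A gone x = x.
Proof. exact (aob_unit A x). Qed.

Lemma g_ob_inv g x : g_ob A (ginv g) (g_ob A g x) = x.
Proof. now rewrite g_ob_mul, gmulVl, g_ob_one. Qed.

Lemma g_mor_mul a b u : g_mor A a (g_mor A b u) = g_mor A (gmul a b) u.
Proof. unfold g_mor. rewrite <- amor_tens. simpl. now rewrite tensm_unitl. Qed.

Lemma g_mor_one u : g_mor A gone u = u.
Proof. exact (amor_unit A u). Qed.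

Lemma g_mor_inv g u : g_mor A (ginv g) (g_mor A g u) = u.
Proof. now rewrite g_mor_mul, gmulVl, g_mor_one. Qed.

Lemma src_g_mor g u : src (g_mor A g u) = g_ob A g (src u).
Proof. unfold g_mor, g_ob. rewrite src_amor. simpl. now rewrite src_idm. Qed.

Lemma tgt_g_mor g u : tgt (g_mor A g u) = g_ob A g (tgt u).
Proof. unfold g_mor, g_ob. rewrite tgt_amor. simpl. now rewrite tgt_idm. Qed.

Lemma g_mor_idm g x : g_mor A g (idm x) = idm (g_ob A g x).
Proof. exact (amor_idm A (munit M, g) x). Qed.

Lemma g_mor_comp g u v : tgt u = src v ->
  g_mor A g (comp v u) = comp (g_mor A g v) (g_mor A g u).
Proof.
  intros e. unfold g_mor. rewrite <- amor_comp by (simpl; rewrite ?tgt_idm, ?src_idm; auto).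
  simpl. rewrite <- (tgt_idm _ (munit M)) at 2. now rewrite comp_idl.
Qed.

Lemma m_ob_tens h h' x : m_ob A h (m_ob A h' x) = m_ob A (tens h h') x.
Proof. unfold m_ob. rewrite <- aob_tens. simpl. now rewrite gmul1l. Qed.

Lemma src_m_mor a u : src (m_mor A a u) = m_ob A (src a) (src u).
Proof. apply src_amor. Qed.

Lemma g_ob_m_ob g h x : g_ob A g (m_ob A h x) = m_ob A h (g_ob A g x).
Proof.
  unfold g_ob, m_ob. rewrite <- !aob_tens. simpl.
  now rewrite tens_unitl, tens_unitr, gmul1r, gmul1l.
Qed.

Lemma aob_pair h g x : aob A ((h, g) : Ob (mcat (ProdMG M G))) x = g_ob A g (m_ob A h x).
Proof. unfold g_ob, m_ob. rewrite <- aob_tens. simpl. now rewrite tens_unitl, gmul1r. Qed.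

Lemma amor_pair a g u :
  amor A ((a, g) : Mor (mcat (ProdMG M G))) u = g_mor A g (m_mor A a u).
Proof. unfold g_mor, m_mor. rewrite <- amor_tens. simpl. now rewrite tensm_unitl, gmul1r. Qed.

Lemma fixob_graph H phi x :
  fixob A (graph_subgroup H phi) x <-> forall h, H h -> g_ob A (phi h) (m_ob A h x) = x.
Proof.
  split.
  - intros Hx h Hh. rewrite <- aob_pair. now apply (Hx (h, phi h)).
  - intros Hx [h g] [Hh e]. simpl in *. subst. rewrite aob_pair. auto.
Qed.

Lemma fixmor_graph H phi u :
  fixmor A (graph_subgroup H phi) u <->
  forall h, H h -> g_mor A (phi h) (m_mor A (idm h) u) = u.
Proof.
  split.
  - intros Hu h Hh. rewrite <- amor_pair. now apply (Hu (h, phi h)).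
  - intros Hu [h g] [Hh e]. simpl in *. subst. rewrite amor_pair. auto.
Qed.
End ProductAction.

Lemma free_action_inj {M : CatMonoid} {G : Group} {C : Category} {A : MAction (ProdMG M G) C} :
  free_action A -> forall a b x, g_ob A a x = g_ob A b x -> a = b.
Proof.
  intros Hfree a b x e. apply gmul_inv_eq, (Hfree _ x).
  rewrite <- g_ob_mul, e. apply g_ob_inv.
Qed.

Section EquivariantProduct.
Context {M : CatMonoid} {G : Group} {C D : Category}
  {A : MAction (ProdMG M G) C} {B : MAction (ProdMG M G) D} {f : Functor C D}.
Hypothesis ef : Equivariant A B f.

Lemma fob_g_ob g x : fob f (g_ob A g x) = g_ob B g (fob f x).
Proof. apply ef. Qed.
Lemma fob_m_ob m x : fob f (m_ob A m x) = m_ob B m (fob f x).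
Proof. apply ef. Qed.
Lemma fmor_m_mor a u : fmor f (m_mor A a u) = m_mor B a (fmor f u).
Proof. apply ef. Qed.
End EquivariantProduct.

Section OrbitFunctor.
Context {M : CatMonoid} {G : Group} {C : Category} {A : MAction (ProdMG M G) C}.
Hypothesis A_free : free_action A.

(* Functoriality on composites is where freeness enters: [g v] and [g' u] are
   composable only if [g = g']. *)
Definition orbit_functor : Functor C (PowerCat C).
Proof.
  refine (Build_Functor C (PowerCat C) (fun x y => exists g, y = g_ob A g x)
                        (fun u w => exists g, w = g_mor A g u) _ _ _ _); simpl.
  - intro u. apply pred_ext; intro y; split.
    + intros (w & (g & ->) & ->). exists g. apply src_g_mor.
    + intros (g & ->). exists (g_mor A g u); split; eauto. symmetry; apply src_g_mor.
  - intro u. apply pred_ext; intro y; split.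
    + intros (w & (g & ->) & ->). exists g. apply tgt_g_mor.
    + intros (g & ->). exists (g_mor A g u); split; eauto. symmetry; apply tgt_g_mor.
  - intro x. apply pred_ext; intro w; split.
    + intros (g & ->). exists (g_ob A g x); split; eauto. apply g_mor_idm.
    + intros (y & (g & ->) & ->). exists g. symmetry; apply g_mor_idm.
  - intros u v e. apply pred_ext; intro w; split.
    + intros (g & ->). exists (g_mor A g v), (g_mor A g u). repeat split; eauto.
      * rewrite tgt_g_mor, src_g_mor; congruence.
      * apply g_mor_comp; auto.
    + intros (v' & u' & (a & ->) & (b & ->) & e' & ->).
      rewrite tgt_g_mor, src_g_mor, e in e'.
      apply (free_action_inj A_free) in e'. subst. exists a. symmetry; apply g_mor_comp; auto.
Defined.
End OrbitFunctor.

Section OrbitQuotient.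
Context {M : CatMonoid} {G : Group} {C : Category} {A : MAction (ProdMG M G) C}.
Hypothesis A_free : free_action A.
Context {Q : Category} {q : Functor C Q}.
Hypothesis q_quot : is_orbit_quotient A q.

Let q_g_ob g x : fob q (g_ob A g x) = fob q x. Proof. apply q_quot. Qed.
Let q_g_mor g u : fmor q (g_mor A g u) = fmor q u. Proof. apply q_quot. Qed.

(* The orbit functor is G-invariant, so it factors through [q]. *)
Lemma quotient_orbits :
  (forall x x', fob q x = fob q x' -> exists g, x' = g_ob A g x) /\
  (forall u u', fmor q u = fmor q u' -> exists g, u' = g_mor A g u).
Proof.
  destruct q_quot as (_ & _ & q_univ).
  destruct (q_univ (PowerCat C) (orbit_functor A_free)) as (k & k_ob & k_mor & _).
  - intros g x. simpl. apply pred_ext; intro y; split.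
    + intros (a & ->). exists (gmul a g). now rewrite g_ob_mul.
    + intros (a & ->). exists (gmul a (ginv g)). now rewrite <- g_ob_mul, g_ob_inv.
  - intros g u. simpl. apply pred_ext; intro y; split.
    + intros (a & ->). exists (gmul a g). now rewrite g_mor_mul.
    + intros (a & ->). exists (gmul a (ginv g)). now rewrite <- g_mor_mul, g_mor_inv.
  - split.
    + intros x x' e. assert (E : fob (orbit_functor A_free) x = fob (orbit_functor A_free) x')
        by (rewrite <- !k_ob; congruence).
      simpl in E. rewrite (equal_f E x'). exists gone. now rewrite g_ob_one.
    + intros u u' e. assert (E : fmor (orbit_functor A_free) u = fmor (orbit_functor A_free) u')
        by (rewrite <- !k_mor; congruence).
      simpl in E. rewrite (equal_f E u'). exists gone. now rewrite g_mor_one.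
Qed.

Lemma quotient_ob_orbit {x x'} : fob q x = fob q x' -> exists g, x' = g_ob A g x.
Proof. apply quotient_orbits. Qed.

Lemma quotient_mor_orbit {u u'} : fmor q u = fmor q u' -> exists g, u' = g_mor A g u.
Proof. apply quotient_orbits. Qed.

Lemma quotient_mor_eq u u' : src u = src u' -> fmor q u = fmor q u' -> u = u'.
Proof.
  intros s e. destruct (quotient_mor_orbit e) as [g ->].
  rewrite src_g_mor in s. rewrite <- (g_ob_one A (src u)) in s at 1.
  apply (free_action_inj A_free) in s. subst. symmetry; apply g_mor_one.
Qed.

Lemma quotient_image_comp u u' : tgt (fmor q u) = src (fmor q u') ->
  exists w, fmor q w = comp (fmor q u') (fmor q u).
Proof.
  intros e. rewrite f_tgt, f_src in e. destruct (quotient_ob_orbit e) as [g eg].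
  exists (comp (g_mor A (ginv g) u') u).
  rewrite f_comp, q_g_mor; [reflexivity |]. rewrite src_g_mor, eg. now rewrite g_ob_inv.
Qed.

(* The image of [q] is a subcategory through which [q] factors; by uniqueness
   in the universal property its inclusion is the identity. *)
Lemma quotient_surj : (forall y, exists x, fob q x = y) /\ (forall v, exists u, fmor q u = v).
Proof.
  set (Po y := exists x, fob q x = y). set (Pm v := exists u, fmor q u = v).
  assert (Pm_src : forall v, Pm v -> Po (src v)) by (intros v [u <-]; exists (src u); symmetry; apply f_src).
  assert (Pm_tgt : forall v, Pm v -> Po (tgt v)) by (intros v [u <-]; exists (tgt u); symmetry; apply f_tgt).
  assert (Pm_idm : forall y, Po y -> Pm (idm y)) by (intros y [x <-]; exists (idm x); apply f_idm).
  assert (Pm_comp : forall u v, tgt u = src v -> Pm u -> Pm v -> Pm (comp v u))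
    by (intros v v' e [u <-] [u' <-]; now apply quotient_image_comp).
  set (S := SubCat Pm_src Pm_tgt Pm_idm Pm_comp).
  unshelve epose (q_image := Build_Functor C S (fun x => exist Po (fob q x) (ex_intro _ x eq_refl))
                        (fun u => exist Pm (fmor q u) (ex_intro _ u eq_refl)) _ _ _ _).
  - intro u; apply sig_eq; apply f_src.
  - intro u; apply sig_eq; apply f_tgt.
  - intro x; apply sig_eq; apply f_idm.
  - intros u v e. apply sig_eq. rewrite (SubCat_comp_val Pm_src Pm_tgt Pm_idm Pm_comp); [now apply f_comp |].
    apply sig_eq; simpl. rewrite f_tgt, f_src. congruence.
  - destruct q_quot as (_ & _ & q_univ).
    destruct (q_univ S q_image) as (k & k_ob & k_mor & _).
    { intros g x; apply sig_eq, q_g_ob. }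
    { intros g u; apply sig_eq, q_g_mor. }
    destruct (q_univ Q q) as (k0 & _ & _ & k0_unique); auto.
    destruct (k0_unique (id_functor Q)) as [id_ob id_mor]; auto.
    destruct (k0_unique (comp_functor (SubCat_incl Pm_src Pm_tgt Pm_idm Pm_comp) k)) as [incl_ob incl_mor].
    { intro x. simpl. now rewrite k_ob. }
    { intro u. simpl. now rewrite k_mor. }
    split.
    + intro y. assert (E : proj1_sig (fob k y) = y).
      { etransitivity; [exact (incl_ob y) | symmetry; exact (id_ob y)]. }
      rewrite <- E. exact (proj2_sig (fob k y)).
    + intro v. assert (E : proj1_sig (fmor k v) = v).
      { etransitivity; [exact (incl_mor v) | symmetry; exact (id_mor v)]. }
      rewrite <- E. exact (proj2_sig (fmor k v)).
Qed.

Lemma quotient_lift_mor c v : fob q c = src v -> exists w, src w = c /\ fmor q w = v.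
Proof.
  intros e. destruct (proj2 quotient_surj v) as [u <-].
  rewrite f_src in e. destruct (quotient_ob_orbit e) as [g eg].
  exists (g_mor A (ginv g) u). split; [| apply q_g_mor].
  rewrite src_g_mor, eg. apply g_ob_inv.
Qed.
End OrbitQuotient.

Section QuotientFixedPoints.
Context {M : CatMonoid} {G : Group} {C : Category} {A : MAction (ProdMG M G) C}.
Context {Q : Category} {q : Functor C Q} {AQ : MAction M Q}.
Hypothesis q_quot : is_orbit_quotient A q.
Hypothesis q_induced : induced_action A q AQ.
Hypothesis A_free : free_action A.
Variable H : Ob (mcat M) -> Prop.

Lemma quotient_fixob phi c : fixob A (graph_subgroup H phi) c -> fixob AQ H (fob q c).
Proof.
  intros Hc h Hh. rewrite <- (proj1 q_induced), <- (proj1 q_quot (phi h)).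
  f_equal. exact (proj1 (fixob_graph A H phi c) Hc h Hh).
Qed.

Lemma quotient_fixmor phi u : fixmor A (graph_subgroup H phi) u -> fixmor AQ H (fmor q u).
Proof.
  intros Hu h Hh. rewrite <- (proj2 q_induced), <- (proj1 (proj2 q_quot) (phi h)).
  f_equal. exact (proj1 (fixmor_graph A H phi u) Hu h Hh).
Qed.

(* [h c] and [c] have the same image in [C/G], so [h c = phi(h)^-1 c] for some
   [phi(h)], unique by freeness; uniqueness makes [phi] multiplicative. *)
Lemma quotient_fixob_lift c :
  (forall h h', H h -> H h' -> H (tens h h')) -> fixob AQ H (fob q c) ->
  exists phi, group_hom_on H phi /\ fixob A (graph_subgroup H phi) c.
Proof.
  intros H_tens Hc.
  assert (phi_ex : forall h, exists g, H h -> g_ob A g (m_ob A h c) = c).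
  { intro h. destruct (classic (H h)) as [Hh | nHh].
    - assert (E : fob q (m_ob A h c) = fob q c) by (rewrite (proj1 q_induced); auto).
      destruct (quotient_ob_orbit A_free q_quot E) as [g eg]. exists g; auto.
    - exists gone; tauto. }
  destruct (choice _ phi_ex) as [phi Hphi]. exists phi.
  split; [| now apply fixob_graph].
  intros h h' Hh Hh'. apply (free_action_inj A_free) with (x := m_ob A (tens h h') c).
  rewrite Hphi by auto. rewrite <- g_ob_mul, <- m_ob_tens, (g_ob_m_ob A (phi h')).
  rewrite (Hphi h'), Hphi; auto.
Qed.

Lemma quotient_fixmor_lift phi u :
  fixob A (graph_subgroup H phi) (src u) -> fixmor AQ H (fmor q u) ->
  fixmor A (graph_subgroup H phi) u.
Proof.
  intros Hs Hu. apply fixmor_graph. intros h Hh.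
  apply (quotient_mor_eq A_free q_quot).
  - rewrite src_g_mor, src_m_mor, src_idm. exact (proj1 (fixob_graph A H phi _) Hs h Hh).
  - rewrite (proj1 (proj2 q_quot)), (proj2 q_induced). auto.
Qed.
End QuotientFixedPoints.

Section OrbitCategories.
Context {M : CatMonoid} {G : Group} {C D : Category}
  {AC : MAction (ProdMG M G) C} {AD : MAction (ProdMG M G) D} {f : Functor C D}
  {QC QD : Category} {qC : Functor C QC} {qD : Functor D QD}
  {AQC : MAction M QC} {AQD : MAction M QD} {fbar : Functor QC QD}.
Hypothesis f_equivariant : Equivariant AC AD f.
Hypotheses (C_free : free_action AC) (D_free : free_action AD).
Hypotheses (qC_quot : is_orbit_quotient AC qC) (qD_quot : is_orbit_quotient AD qD).
Hypotheses (qC_induced : induced_action AC qC AQC) (qD_induced : induced_action AD qD AQD).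
Hypothesis fbar_ob : forall x, fob fbar (fob qC x) = fob qD (fob f x).
Hypothesis fbar_mor : forall u, fmor fbar (fmor qC u) = fmor qD (fmor f u).

Lemma fbar_equivariant : Equivariant AQC AQD fbar.
Proof.
  destruct (quotient_surj C_free qC_quot) as [qC_ob_surj qC_mor_surj]. split.
  - intros m y. destruct (qC_ob_surj y) as [x <-].
    rewrite <- (proj1 qC_induced), !fbar_ob, (fob_m_ob f_equivariant).
    apply qD_induced.
  - intros a v. destruct (qC_mor_surj v) as [u <-].
    rewrite <- (proj2 qC_induced), !fbar_mor, (fmor_m_mor f_equivariant).
    apply qD_induced.
Qed.

Lemma orbit_eq_of_image_eq x x' : fob qC x = fob qC x' -> fob f x = fob f x' -> x = x'.
Proof.
  intros eq ef. destruct (quotient_ob_orbit C_free qC_quot eq) as [g ->].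
  rewrite (fob_g_ob f_equivariant), <- (g_ob_one AD (fob f x)) in ef at 1.
  apply (free_action_inj D_free) in ef. subst. symmetry; apply g_ob_one.
Qed.

Variable H : Ob (mcat M) -> Prop.

Lemma fixob_of_images phi x :
  fixob AQC H (fob qC x) -> fixob AD (graph_subgroup H phi) (fob f x) ->
  fixob AC (graph_subgroup H phi) x.
Proof.
  intros Hqx Hfx. apply fixob_graph. intros h Hh. apply orbit_eq_of_image_eq.
  - rewrite (proj1 qC_quot), (proj1 qC_induced). auto.
  - rewrite (fob_g_ob f_equivariant), (fob_m_ob f_equivariant).
    exact (proj1 (fixob_graph AD H phi _) Hfx h Hh).
Qed.

Hypothesis H_tens : forall h h', H h -> H h' -> H (tens h h').
Hypothesis f_graph_equiv :
  forall phi, group_hom_on H phi -> K_equivalence AC AD f (graph_subgroup H phi).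
Variable fbar_eq : Equivariant AQC AQD fbar.

Lemma fix_fbar_ess_surj : ess_surj (fix_functor fbar_eq H).
Proof.
  intros [y Hy]. destruct (proj1 (quotient_surj D_free qD_quot) y) as [d <-].
  destruct (quotient_fixob_lift qD_quot qD_induced D_free H d H_tens Hy) as (phi & Hphi & Hd).
  destruct (f_graph_equiv phi Hphi) as [e Heq].
  destruct (is_equivalence_ess_surj _ Heq (exist _ d Hd)) as ([x Hx] & [a Ha] & [b Hb] & ab).
  apply (functor_inverse_pair (fix_incl _ _)), (functor_inverse_pair qD) in ab. simpl in ab.
  exists (exist _ (fob qC x) (quotient_fixob qC_quot qC_induced H phi x Hx)),
         (exist _ (fmor qD a) (quotient_fixmor qD_quot qD_induced H phi a Ha)),
         (exist _ (fmor qD b) (quotient_fixmor qD_quot qD_induced H phi b Hb)).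
  apply FixCat_inverse_pair. simpl. now rewrite fbar_ob.
Qed.

Lemma fix_fbar_faithful : faithful (fix_functor fbar_eq H).
Proof.
  intros [u0 Hu0] [u1 Hu1] su tu fu.
  apply (f_equal (@proj1_sig _ _)) in su, tu, fu. simpl in su, tu, fu.
  apply sig_eq; simpl.
  destruct (proj2 (quotient_surj C_free qC_quot) u0) as [w0 <-].
  destruct (quotient_lift_mor C_free qC_quot (src w0) u1) as (w1 & sw1 & <-);
    [now rewrite <- f_src |].
  assert (Hc : fixob AQC H (fob qC (src w0))) by (rewrite <- f_src; exact (fix_src Hu0)).
  destruct (quotient_fixob_lift qC_quot qC_induced C_free H (src w0) H_tens Hc)
    as (phi & Hphi & Hs).
  assert (Hw0 := quotient_fixmor_lift qC_quot qC_induced C_free H phi w0 Hs Hu0).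
  assert (Hw1 : fixmor AC (graph_subgroup H phi) w1).
  { apply (quotient_fixmor_lift qC_quot qC_induced C_free); [rewrite sw1 |]; assumption. }
  assert (fw : fmor f w0 = fmor f w1).
  { apply (quotient_mor_eq D_free qD_quot); [rewrite !f_src; congruence |].
    now rewrite <- !fbar_mor. }
  assert (tw : tgt w0 = tgt w1).
  { apply orbit_eq_of_image_eq; rewrite <- !f_tgt; congruence. }
  destruct (f_graph_equiv phi Hphi) as [e Heq].
  assert (w01 : w0 = w1).
  { refine (f_equal (@proj1_sig _ _)
      (is_equivalence_faithful _ Heq (exist _ w0 Hw0) (exist _ w1 Hw1) _ _ _));
      apply sig_eq; simpl; congruence. }
  now rewrite w01.
Qed.

Lemma fix_fbar_full : full (fix_functor fbar_eq H).
Proof.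
  intros [x0 Hx0] [x1 Hx1] [v Hv] sv tv.
  apply (f_equal (@proj1_sig _ _)) in sv, tv. simpl in sv, tv.
  destruct (proj1 (quotient_surj C_free qC_quot) x0) as [c <-].
  destruct (proj1 (quotient_surj C_free qC_quot) x1) as [c1 <-].
  rewrite fbar_ob in sv, tv.
  destruct (quotient_lift_mor D_free qD_quot (fob f c) v) as (w & sw & <-); [congruence |].
  rewrite f_tgt in tv.
  destruct (quotient_ob_orbit D_free qD_quot (eq_sym tv)) as [g tw].
  set (c2 := g_ob AC g c1).
  rewrite <- (fob_g_ob f_equivariant) in tw. fold c2 in tw.
  destruct (quotient_fixob_lift qC_quot qC_induced C_free H c H_tens Hx0) as (phi & Hphi & Hc).
  assert (Hw : fixmor AD (graph_subgroup H phi) w).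
  { apply (quotient_fixmor_lift qD_quot qD_induced D_free); [| exact Hv].
    rewrite sw. exact (equivariant_fixob _ _ f_equivariant Hc). }
  assert (Hc2 : fixob AC (graph_subgroup H phi) c2).
  { apply fixob_of_images.
    - unfold c2. rewrite (proj1 qC_quot). exact Hx1.
    - rewrite <- tw. exact (fix_tgt Hw). }
  destruct (f_graph_equiv phi Hphi) as [e Heq].
  destruct (is_equivalence_full _ Heq (exist _ c Hc) (exist _ c2 Hc2) (exist _ w Hw))
    as ([u Hu] & su & tu & fu); [apply sig_eq; exact sw | apply sig_eq; exact tw |].
  apply (f_equal (@proj1_sig _ _)) in su, tu, fu. simpl in su, tu, fu.
  exists (exist _ (fmor qC u) (quotient_fixmor qC_quot qC_induced H phi u Hu)).
  repeat split; apply sig_eq; simpl.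
  - now rewrite f_src, su.
  - rewrite f_tgt, tu. apply qC_quot.
  - now rewrite fbar_mor, fu.
Qed.
End OrbitCategories.

Theorem mainTheorem8
  (M : CatMonoid) (F : (Ob (mcat M) -> Prop) -> Prop) (G : Group)
  (C D : Category)
  (AC : MAction (ProdMG M G) C) (AD : MAction (ProdMG M G) D)
  (f : Functor C D)
  (QC QD : Category) (qC : Functor C QC) (qD : Functor D QD)
  (AQC : MAction M QC) (AQD : MAction M QD)
  (fbar : Functor QC QD) :
  is_family F ->
  Equivariant AC AD f ->
  (forall (H : Ob (mcat M) -> Prop) (phi : Ob (mcat M) -> gcar G),
      F H -> group_hom_on H phi -> K_equivalence AC AD f (graph_subgroup H phi)) ->
  free_action AC -> free_action AD ->
  is_orbit_quotient AC qC -> is_orbit_quotient AD qD ->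
  induced_action AC qC AQC -> induced_action AD qD AQD ->
  (forall x, fob fbar (fob qC x) = fob qD (fob f x)) ->
  (forall u, fmor fbar (fmor qC u) = fmor qD (fmor f u)) ->
  forall H : Ob (mcat M) -> Prop, F H -> K_equivalence AQC AQD fbar H.
Proof.
  intros F_family f_equivariant f_graph_equiv C_free D_free qC_quot qD_quot
         qC_induced qD_induced fbar_ob fbar_mor H HF.
  destruct (proj1 F_family H HF) as [(_ & H_tens & _) _].
  assert (fbar_eq : Equivariant AQC AQD fbar) by (eapply fbar_equivariant; eauto).
  exists fbar_eq. apply full_faithful_ess_surj_is_equivalence.
  - eapply fix_fbar_ess_surj with (H := H) (fbar_eq := fbar_eq); eauto.
  - eapply fix_fbar_full with (H := H) (fbar_eq := fbar_eq); eauto.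
  - eapply fix_fbar_faithful with (H := H) (fbar_eq := fbar_eq); eauto.
Qed.
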